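(* Let $z\in\mathbb{R}$ and $\tau\in\mathcal{L}$ with $C(\tau)=\{z\}$. Then $(\mathbb{R},\tau)$ is second countable if and only if the point $z$ has a countable local base in $(\mathbb{R},\tau)$; and $(\mathbb{R},\tau)$ is completely normal if and only if it is regular.
   Context: $\eta$ denotes the Euclidean topology on $\mathbb{R}$. $\mathcal{L}$ denotes the family of all Hausdorff topologies $\tau$ on $\mathbb{R}$ with $\tau\subset\eta$. For $\tau\in\mathcal{L}$ and $a\in\mathbb{R}$ let $\mathcal{N}_\tau(a)$ be the neighborhood filter of $a$ in $(\mathbb{R},\tau)$; $C(\tau)$ is the set of all $a\in\mathbb{R}$ with $\mathcal{N}_\tau(a)\neq\mathcal{N}_\eta(a)$. *)

From Stdlib Require Import Reals.
Open Scope R_scope.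

Definition subset (A B : R -> Prop) : Prop := forall x, A x -> B x.

Definition is_topology (tau : (R -> Prop) -> Prop) : Prop :=
  tau (fun _ => False) /\ tau (fun _ => True) /\
  (forall U V, tau U -> tau V -> tau (fun x => U x /\ V x)) /\
  (forall F : (R -> Prop) -> Prop, (forall U, F U -> tau U) ->
     tau (fun x => exists U, F U /\ U x)).

Definition eta (U : R -> Prop) : Prop :=
  forall x, U x -> exists e, 0 < e /\ forall y, Rabs (y - x) < e -> U y.

Definition hausdorff (tau : (R -> Prop) -> Prop) : Prop :=
  forall x y, x <> y -> exists U V, tau U /\ tau V /\ U x /\ V y /\
    (forall w, U w -> V w -> False).

Definition in_L (tau : (R -> Prop) -> Prop) : Prop :=
  is_topology tau /\ hausdorff tau /\ (forall U, tau U -> eta U).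

Definition nbhd (tau : (R -> Prop) -> Prop) (a : R) (N : R -> Prop) : Prop :=
  exists U, tau U /\ U a /\ subset U N.

Definition Cset (tau : (R -> Prop) -> Prop) (a : R) : Prop :=
  ~ (forall N, nbhd tau a N <-> nbhd eta a N).

(* second countable: a countable base (indexed by nat; repetitions allowed) *)
Definition second_countable (tau : (R -> Prop) -> Prop) : Prop :=
  exists B : nat -> (R -> Prop), (forall n, tau (B n)) /\
    (forall U, tau U -> forall x, U x -> exists n, B n x /\ subset (B n) U).

Definition countable_local_base (tau : (R -> Prop) -> Prop) (z : R) : Prop :=
  exists B : nat -> (R -> Prop), (forall n, nbhd tau z (B n)) /\
    (forall N, nbhd tau z N -> exists n, subset (B n) N).

Definition closure (tau : (R -> Prop) -> Prop) (A : R -> Prop) (x : R) : Prop :=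
  forall U, tau U -> U x -> exists y, U y /\ A y.

Definition closed (tau : (R -> Prop) -> Prop) (F : R -> Prop) : Prop :=
  tau (fun x => ~ F x).

Definition regular (tau : (R -> Prop) -> Prop) : Prop :=
  forall F x, closed tau F -> ~ F x ->
    exists U V, tau U /\ tau V /\ U x /\ subset F V /\
      (forall w, U w -> V w -> False).

Definition completely_normal (tau : (R -> Prop) -> Prop) : Prop :=
  forall A B : R -> Prop,
    (forall x, closure tau A x -> B x -> False) ->
    (forall x, A x -> closure tau B x -> False) ->
    exists U V, tau U /\ tau V /\ subset A U /\ subset B V /\
      (forall w, U w -> V w -> False).

(* Away from z the topology tau has the Euclidean neighbourhoods, so every
   Euclidean open set avoiding z is tau-open.

   Second countability: a countable local base at z, together with the
   punctured rational balls (open in tau since they avoid z), is a countable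
   base.

   Complete normality: for separated A and B, the usual metric construction
   (the union of balls of half the radius around points of A whose full balls
   miss B, and symmetrically for B) gives disjoint Euclidean open sets, which
   stay tau-open once z is removed.  The point z itself belongs to at most one
   of A, B, say A; regularity yields an open W containing z whose closure
   misses B, and W is added to the side of A while its closure is removed from
   the side of B. *)

From Stdlib Require Import Reals.
From Stdlib Require Import Lra Lia ZArith Classical FunctionalExtensionality PropExtensionality.
From Stdlib Require Cantor.
Open Scope R_scope.

Section Topology.

Variable tau : (R -> Prop) -> Prop.
Hypothesis tau_top : is_topology tau.

Lemma open_ext (P Q : R -> Prop) : tau P -> (forall x, P x <-> Q x) -> tau Q.
Proof.
  intros HP E. replace Q with P; auto.
  apply functional_extensionality; intro x; apply propositional_extensionality; auto.
Qed.

Lemma open_locally (W : R -> Prop) :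
  (forall y, W y -> nbhd tau y W) -> tau W.
Proof.
  intros H. destruct tau_top as [_ [_ [_ Hunion]]].
  apply open_ext with (fun x => exists U, (tau U /\ subset U W) /\ U x).
  - apply Hunion. now intros U [].
  - intro x; split.
    + intros [U [[_ HU] Ux]]; auto.
    + intro Wx. destruct (H x Wx) as [U [tU [Ux sU]]]. now exists U.
Qed.

Lemma open_or (U V : R -> Prop) : tau U -> tau V -> tau (fun x => U x \/ V x).
Proof.
  intros HU HV. apply open_locally.
  intros y [Uy|Vy]; [exists U|exists V]; repeat split; auto; intros x; auto.
Qed.

Lemma open_interior (N : R -> Prop) : tau (fun y => nbhd tau y N).
Proof.
  apply open_locally. intros y [V [tV [Vy sV]]].
  exists V; repeat split; auto. intros w Vw. now exists V.
Qed.

Lemma closure_sub (W : R -> Prop) y : W y -> closure tau W y.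
Proof. intros Wy U _ Uy; now exists y. Qed.

Lemma not_closure_nbhd (A : R -> Prop) a : ~ closure tau A a ->
  exists U, tau U /\ U a /\ forall y, U y -> ~ A y.
Proof.
  intro H. apply NNPP; intro Hn. apply H; intros U tU Ua.
  apply NNPP; intro Hno. apply Hn; exists U; repeat split; auto.
  intros y Uy Ay; apply Hno; now exists y.
Qed.

Lemma open_not_closure (W : R -> Prop) : tau (fun y => ~ closure tau W y).
Proof.
  apply open_locally. intros y Hy.
  destruct (not_closure_nbhd W y Hy) as [U [tU [Uy HU]]].
  exists U; repeat split; auto. intros u Uu Hcl.
  destruct (Hcl U tU Uu) as [w [Uw Ww]]. exact (HU w Uw Ww).
Qed.

Lemma closed_closure (F : R -> Prop) x : closed tau F -> closure tau F x -> F x.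
Proof.
  intros HF Hcl. apply NNPP; intro Fx.
  destruct (Hcl _ HF Fx) as [w [nFw Fw]]. contradiction.
Qed.

Lemma hausdorff_closure_point x y : hausdorff tau ->
  closure tau (fun w => w = x) y -> y = x.
Proof.
  intros Hh Hcl. apply NNPP; intro yx.
  destruct (Hh y x yx) as [U [V [tU [_ [Uy [Vx disj]]]]]].
  destruct (Hcl U tU Uy) as [w [Uw ->]]. exact (disj x Uw Vx).
Qed.

Lemma regular_shrink (W : R -> Prop) x : regular tau -> tau W -> W x ->
  exists W', tau W' /\ W' x /\ forall y, closure tau W' y -> W y.
Proof.
  intros Hreg tW Wx.
  destruct (Hreg (fun y => ~ W y) x) as [U [V [tU [tV [Ux [sF disj]]]]]].
  - apply open_ext with W; auto. intro y; split; auto. apply NNPP.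
  - auto.
  - exists U; repeat split; auto. intros y Hcl. apply NNPP; intro nWy.
    destruct (Hcl V tV (sF y nWy)) as [w [Vw Uw]]. exact (disj w Uw Vw).
Qed.

Lemma second_countable_countable_local_base z :
  second_countable tau -> countable_local_base tau z.
Proof.
  intros [B [HB Hbase]].
  exists (fun n x => B n z -> B n x). split.
  - intro n. destruct (classic (B n z)) as [Hz|Hz].
    + exists (B n). repeat split; auto. intros x Hx _; exact Hx.
    + exists (fun _ => True). repeat split; [apply tau_top|]. intros x _ Hz'; contradiction.
  - intros N [U [tU [Uz sU]]]. destruct (Hbase U tU z Uz) as [n [Bz sB]].
    exists n. intros x Hx. apply sU, sB, Hx, Bz.
Qed.

Definition open_separated (A B : R -> Prop) : Prop :=
  exists U V, tau U /\ tau V /\ subset A U /\ subset B V /\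
    (forall w, U w -> V w -> False).

Definition separated (A B : R -> Prop) : Prop :=
  (forall x, closure tau A x -> B x -> False) /\
  (forall x, A x -> closure tau B x -> False).

Lemma separated_sym A B : separated A B -> separated B A.
Proof. intros [H1 H2]; split; intros x Hx Hy; [exact (H2 x Hy Hx) | exact (H1 x Hy Hx)]. Qed.

Lemma open_separated_sym A B : open_separated A B -> open_separated B A.
Proof.
  intros [U [V [tU [tV [sA [sB disj]]]]]].
  exists V, U; repeat split; auto. intros w Vw Uw; exact (disj w Uw Vw).
Qed.

Lemma hausdorff_completely_normal_regular :
  hausdorff tau -> completely_normal tau -> regular tau.
Proof.
  intros Hh Hcn F x HF Fx.
  destruct (Hcn (fun y => y = x) F) as [U [V [tU [tV [sx [sF disj]]]]]].
  - intros y Hcl Fy. rewrite (hausdorff_closure_point x y Hh Hcl) in Fy. contradiction.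
  - intros y -> Hcl. exact (Fx (closed_closure F x HF Hcl)).
  - exists U, V; repeat split; auto.
Qed.

End Topology.

Lemma eta_open_outside_C (tau : (R -> Prop) -> Prop) (W : R -> Prop) :
  is_topology tau -> eta W -> (forall y, W y -> ~ Cset tau y) -> tau W.
Proof.
  intros T HW HC. apply open_locally; auto. intros y Wy.
  pose proof (NNPP _ (HC y Wy)) as Hfilter.
  apply Hfilter. exists W; repeat split; auto. intros x; auto.
Qed.

Definition enumerable (I : Type) : Prop :=
  exists e : nat -> I, forall i, exists n, e n = i.

Lemma enumerable_nat : enumerable nat.
Proof. exists (fun n => n). intro i; now exists i. Qed.

Lemma enumerable_Z : enumerable Z.
Proof.
  exists (fun n => let (i, j) := Cantor.of_nat n in (Z.of_nat i - Z.of_nat j)%Z).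
  intro k. exists (Cantor.to_nat (Z.to_nat k, Z.to_nat (- k))).
  rewrite Cantor.cancel_of_to. lia.
Qed.

Lemma enumerable_prod (I J : Type) : enumerable I -> enumerable J -> enumerable (I * J).
Proof.
  intros [e1 H1] [e2 H2].
  exists (fun n => let (p, q) := Cantor.of_nat n in (e1 p, e2 q)).
  intros [i j]. destruct (H1 i) as [p <-], (H2 j) as [q <-].
  exists (Cantor.to_nat (p, q)). now rewrite Cantor.cancel_of_to.
Qed.

Lemma enumerable_sum (I J : Type) : enumerable I -> enumerable J -> enumerable (I + J).
Proof.
  intros [e1 H1] [e2 H2].
  exists (fun n => match Cantor.of_nat n with
                   | (O, p) => inl (e1 p)
                   | (S _, p) => inr (e2 p) end).
  intros [i|j].
  - destruct (H1 i) as [p <-]. exists (Cantor.to_nat (O, p)). now rewrite Cantor.cancel_of_to.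
  - destruct (H2 j) as [p <-]. exists (Cantor.to_nat (S O, p)). now rewrite Cantor.cancel_of_to.
Qed.

Lemma second_countable_enumerable_base (tau : (R -> Prop) -> Prop) (I : Type)
  (B : I -> R -> Prop) : enumerable I -> (forall i, tau (B i)) ->
  (forall U, tau U -> forall x, U x -> exists i, B i x /\ subset (B i) U) ->
  second_countable tau.
Proof.
  intros [e He] HB Hbase. exists (fun n => B (e n)). split; [intro n; apply HB|].
  intros U tU x Ux. destruct (Hbase U tU x Ux) as [i [Bx sB]].
  destruct (He i) as [n <-]. now exists n.
Qed.

Lemma Rabs_sub_triang a b c : Rabs (a - c) <= Rabs (a - b) + Rabs (b - c).
Proof. exact (Rdist_tri a c b). Qed.

Lemma eta_minus_point (W : R -> Prop) (z : R) : eta W -> eta (fun y => W y /\ y <> z).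
Proof.
  intros HW y [Wy yz]. destruct (HW y Wy) as [e [He Hball]].
  assert (Hd : 0 < Rabs (y - z)) by (apply Rabs_pos_lt; lra).
  exists (Rmin e (Rabs (y - z))). split; [now apply Rmin_pos|].
  intros w Hw. pose proof (Rmin_l e (Rabs (y - z))). pose proof (Rmin_r e (Rabs (y - z))).
  split; [apply Hball; lra|].
  intros ->. rewrite Rabs_minus_sym in Hw. lra.
Qed.

Definition grid_ball (m : nat) (k : Z) : R -> Prop :=
  fun y => Rabs (y - IZR k / INR (S m)) < / INR (S m).

Lemma grid_ball_eta m k : eta (grid_ball m k).
Proof.
  intros y Hy. exists (/ INR (S m) - Rabs (y - IZR k / INR (S m))).
  split; [unfold grid_ball in Hy; lra|]. intros w Hw.
  pose proof (Rabs_sub_triang w y (IZR k / INR (S m))). unfold grid_ball. lra.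
Qed.

Lemma grid_ball_fine x e : 0 < e ->
  exists m k, grid_ball m k x /\ forall y, grid_ball m k y -> Rabs (y - x) < e.
Proof.
  intros He. destruct (archimed_cor1 (e / 2)) as [[|m] [Hm Hpos]]; [lra|lia|].
  set (n := INR (S m)) in Hm. assert (Hn : 0 < n) by (apply lt_0_INR; lia).
  destruct (archimed (x * n)) as [Hup1 Hup2].
  (* k / n is the largest grid point not exceeding x. *)
  set (k := (up (x * n) - 1)%Z).
  assert (Hk : IZR k = IZR (up (x * n)) - 1) by (unfold k; now rewrite minus_IZR).
  assert (Hx : grid_ball m k x).
  { unfold grid_ball. fold n.
    replace (x - IZR k / n) with ((x * n - IZR k) * / n) by (field; lra).
    assert (0 < / n) by (now apply Rinv_0_lt_compat).
    apply Rabs_def1; nra. }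
  exists m, k. split; [exact Hx|]. intros y Hy.
  pose proof (Rabs_sub_triang y (IZR k / n) x).
  unfold grid_ball in Hx, Hy. fold n in Hx, Hy.
  rewrite Rabs_minus_sym in Hx. lra.
Qed.

Definition half_ball_hull (A B : R -> Prop) : R -> Prop :=
  fun y => exists a r, A a /\ 0 < r /\ (forall w, Rabs (w - a) < r -> ~ B w) /\
     Rabs (y - a) < r / 2.

Lemma half_ball_hull_eta A B : eta (half_ball_hull A B).
Proof.
  intros y [a [r [Aa [Hr [Hball Hy]]]]]. exists (r / 2 - Rabs (y - a)). split; [lra|].
  intros w Hw. exists a, r; repeat split; auto.
  pose proof (Rabs_sub_triang w y a). lra.
Qed.

Lemma half_ball_hull_disjoint A B y :
  half_ball_hull A B y -> half_ball_hull B A y -> False.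
Proof.
  intros [a [r [Aa [Hr [HB Hy]]]]] [b [s [Bb [Hs [HA Hy']]]]].
  pose proof (Rabs_sub_triang a y b). rewrite (Rabs_minus_sym a y) in H.
  destruct (Rle_dec s r).
  - apply (HB b); auto. rewrite Rabs_minus_sym. lra.
  - apply (HA a); auto. lra.
Qed.

Lemma half_ball_hull_self (tau : (R -> Prop) -> Prop) A B a :
  (forall U, tau U -> eta U) -> A a -> ~ closure tau B a -> half_ball_hull A B a.
Proof.
  intros Hcoarse Aa Hcl. destruct (not_closure_nbhd tau B a Hcl) as [U [tU [Ua HU]]].
  destruct (Hcoarse U tU a Ua) as [e [He Hball]].
  exists a, e; repeat split; auto.
  replace (a - a) with 0 by ring. rewrite Rabs_R0. lra.
Qed.

Section EuclideanAwayFromPoint.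

Variable tau : (R -> Prop) -> Prop.
Variable z : R.
Hypothesis tau_top : is_topology tau.
Hypothesis tau_coarser : forall U, tau U -> eta U.
Hypothesis tau_eta_away : forall W, eta W -> ~ W z -> tau W.

Lemma open_eta_minus_z W : eta W -> tau (fun y => W y /\ y <> z).
Proof.
  intros HW. apply tau_eta_away; [now apply eta_minus_point|]. now intros [_ []].
Qed.

Lemma countable_local_base_second_countable :
  countable_local_base tau z -> second_countable tau.
Proof.
  intros [LB [HLB Hlocal]].
  apply second_countable_enumerable_base with (I := (nat + nat * Z)%type)
    (B := fun i => match i with
                   | inl m => fun y => nbhd tau y (LB m)
                   | inr (m, k) => fun y => grid_ball m k y /\ y <> z end).
  - apply enumerable_sum, enumerable_prod; auto using enumerable_nat, enumerable_Z.
  - intros [m|[m k]]; [now apply open_interior | apply open_eta_minus_z, grid_ball_eta].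
  - intros U tU x Ux. destruct (Req_dec x z) as [->|xz].
    + destruct (Hlocal U) as [m Hm]; [exists U; repeat split; auto; intros y; auto|].
      exists (inl m). split; [apply HLB|].
      intros w [V [_ [Vw sV]]]. apply Hm, sV, Vw.
    + destruct (tau_coarser U tU x Ux) as [e [He Hball]].
      destruct (grid_ball_fine x e He) as [m [k [Hx Hfine]]].
      exists (inr (m, k)). split; [now split|].
      intros y [Hy _]. apply Hball, Hfine, Hy.
Qed.

Lemma open_separated_from_nbhd_z A B W : separated tau A B ->
  tau W -> (A z -> W z) -> (forall y, closure tau W y -> ~ B y) -> ~ B z ->
  open_separated tau A B.
Proof.
  intros [HAB HBA] tW HWz HWB Bz.
  exists (fun y => W y \/ (half_ball_hull A B y /\ y <> z)),
         (fun y => (half_ball_hull B A y /\ y <> z) /\ ~ closure tau W y).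
  split; [|split; [|split; [|split]]].
  - apply open_or; auto. apply open_eta_minus_z, half_ball_hull_eta.
  - apply (proj1 (proj2 (proj2 tau_top))).
    + apply open_eta_minus_z, half_ball_hull_eta.
    + now apply open_not_closure.
  - intros a Aa. destruct (Req_dec a z) as [->|az]; [left; auto|].
    right; split; auto. apply (half_ball_hull_self tau); auto. intro; eapply HBA; eauto.
  - intros b Bb. repeat split.
    + apply (half_ball_hull_self tau); auto. intro; eapply HAB; eauto.
    + intros ->. contradiction.
    + intro Hcl. eapply HWB; eauto.
  - intros w [Ww|[Hw _]] [[Hw' _] Hcl].
    + exact (Hcl (closure_sub tau W w Ww)).
    + exact (half_ball_hull_disjoint A B w Hw Hw').
Qed.

Lemma regular_open_separated A B : regular tau -> separated tau A B ->
  ~ closure tau B z -> open_separated tau A B.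
Proof.
  intros Hreg Hsep HBz.
  destruct (not_closure_nbhd tau B z HBz) as [W [tW [Wz HW]]].
  destruct (regular_shrink tau W z Hreg tW Wz) as [W' [tW' [W'z HW']]].
  apply (open_separated_from_nbhd_z A B W'); auto.
Qed.

Lemma regular_completely_normal : regular tau -> completely_normal tau.
Proof.
  intros Hreg A B HAB HBA.
  assert (Hsep : separated tau A B) by (split; auto).
  destruct (classic (A z)) as [Az|Az].
  { apply (regular_open_separated A B); auto. intro Hcl; exact (HBA z Az Hcl). }
  destruct (classic (B z)) as [Bz|Bz].
  { apply open_separated_sym, (regular_open_separated B A); auto using separated_sym.
    intro Hcl; exact (HAB z Hcl Bz). }
  apply (open_separated_from_nbhd_z A B (fun _ => False)); auto.
  - apply tau_top.
  - intros y Hcl. destruct (Hcl (fun _ => True)) as [w [_ []]]; auto. apply tau_top.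
Qed.

End EuclideanAwayFromPoint.

Theorem lemma4 (z : R) (tau : (R -> Prop) -> Prop) :
  in_L tau ->
  (forall a, Cset tau a <-> a = z) ->
  ((second_countable tau <-> countable_local_base tau z) /\
   (completely_normal tau <-> regular tau)).
Proof.
  intros [T [Hh Hcoarse]] HC.
  assert (Haway : forall W, eta W -> ~ W z -> tau W).
  { intros W HW Wz. apply eta_open_outside_C; auto.
    intros y Wy Cy. apply HC in Cy. subst. contradiction. }
  split; split.
  - apply second_countable_countable_local_base; auto.
  - apply (countable_local_base_second_countable tau z); auto.
  - apply hausdorff_completely_normal_regular; auto.
  - apply (regular_completely_normal tau z); auto.
Qed.
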